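(* Let $J\subset R$ be a graded ideal with $\sigma(J)\subset J$ such that $J$ is generated, as an ideal, by $\bigcup_{k\ge0}\sigma^k\big(\bigoplus_{d\ge0}J(d)_d\big)$, where $J(d)=J\cap R(d)$. Then there exists a unique graded two-sided ideal $I\subset F$ with $J=L(I)$.
   Context: Let $\mathbb K$ be a field and $F=\mathbb K\langle x_1,\dots,x_n\rangle$ with standard grading. Let $P=\mathbb K[x_{ij}\mid 1\le i\le n,\ j\ge1]$ with $\deg x_{ij}=1$, $Q$ the ideal generated by all $x_{ij}x_{kj}$, $R=P/Q$, $\sigma:R\to R$ the algebra endomorphism $x_{ij}\mapsto x_{i,j+1}$, and $\iota:F\to R$ the $\mathbb K$-linear map $x_{i_1}\cdots x_{i_d}\mapsto x_{i_11}x_{i_22}\cdots x_{i_dd}$. $R(d)$ is the subalgebra of $R$ generated by the $x_{ij}$ with $j\le d$. For a graded two-sided ideal $I\subset F$, $L(I)$ is the ideal of $R$ generated by $\bigcup_{k\ge0}\sigma^k(\iota(I))$. *)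

From HB Require Import structures.
From mathcomp Require Import all_boot all_order all_algebra.
Set Implicit Arguments. Unset Strict Implicit. Unset Printing Implicit Defensive.
Import GRing.Theory.
Local Open Scope ring_scope.

Section Defs.
Variables (K : fieldType) (n : nat).

(* A word x_{i_1}...x_{i_d} is the sequence [:: i_1; ...; i_d] (variables
   indexed by 'I_n).  Elements are coefficient functions word -> K; the
   polynomials are the finitely supported ones. *)
Definition word := seq 'I_n.
Definition Fser := word -> K.
Definition F_finsupp (f : Fser) : Prop :=
  exists s : seq word, forall w, f w != 0 -> w \in s.
Definition Fzero : Fser := fun _ => 0.
Definition Fadd (f g : Fser) : Fser := fun w => f w + g w.
Definition Fmul (f g : Fser) : Fser :=
  fun w => \sum_(i < (size w).+1) f (take i w) * g (drop i w).
Definition Fhcomp (d : nat) (f : Fser) : Fser :=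
  fun w => if size w == d then f w else 0.

Definition F_ideal (I : Fser -> Prop) : Prop :=
  [/\ forall f, I f -> F_finsupp f,
      I Fzero,
      forall f g, I f -> I g -> I (Fadd f g),
      forall a f, F_finsupp a -> I f -> I (Fmul a f)
    & forall f a, F_finsupp a -> I f -> I (Fmul f a)].
Definition F_graded_ideal (I : Fser -> Prop) : Prop :=
  F_ideal I /\ forall f d, I f -> I (Fhcomp d f).

(* Q is the monomial ideal generated by all x_ij x_kj, so R has as K-basis
   the monomials with at most one variable (of exponent 1) in each column j.
   Such a monomial is encoded by s : seq (option 'I_n) where the entry at
   position j-1 is Some i iff x_ij occurs; canonical form: no trailing None. *)
Definition canon (s : seq (option 'I_n)) : bool :=
  if rev s is None :: _ then false else true.
Fixpoint dropNone (s : seq (option 'I_n)) : seq (option 'I_n) :=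
  if s is None :: t then dropNone t else s.
Definition trim (s : seq (option 'I_n)) := rev (dropNone (rev s)).
Lemma canon_trim s : canon (trim s).
Proof. rewrite /canon /trim revK; by elim: (rev s) => [|[a|] t IH]. Qed.

Definition mon := {s : seq (option 'I_n) | canon s}.
Definition mkmon (s : seq (option 'I_n)) : mon := exist _ (trim s) (canon_trim s).
Definition mdeg (m : mon) : nat := count (fun o : option 'I_n => o != None) (val m).

Definition Rser := mon -> K.
Definition R_finsupp (f : Rser) : Prop :=
  exists s : seq mon, forall m, f m != 0 -> m \in s.
Definition Rzero : Rser := fun _ => 0.
Definition Radd (f g : Rser) : Rser := fun m => f m + g m.
Fixpoint splits (s : seq (option 'I_n)) :
    seq (seq (option 'I_n) * seq (option 'I_n)) :=
  match s with
  | [::] => [:: ([::], [::])]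
  | None :: t => [seq (None :: p.1, None :: p.2) | p <- splits t]
  | Some i :: t => [seq (Some i :: p.1, None :: p.2) | p <- splits t]
                   ++ [seq (None :: p.1, Some i :: p.2) | p <- splits t]
  end.
Definition Rmul (f g : Rser) : Rser :=
  fun m => \sum_(p <- splits (val m)) f (mkmon p.1) * g (mkmon p.2).
Definition Rhcomp (d : nat) (f : Rser) : Rser :=
  fun m => if mdeg m == d then f m else 0.

Definition R_ideal (J : Rser -> Prop) : Prop :=
  [/\ forall f, J f -> R_finsupp f,
      J Rzero,
      forall f g, J f -> J g -> J (Radd f g)
    & forall a f, R_finsupp a -> J f -> J (Rmul a f)].
Definition R_graded_ideal (J : Rser -> Prop) : Prop :=
  R_ideal J /\ forall f d, J f -> J (Rhcomp d f).
Definition R_gen (S : Rser -> Prop) (f : Rser) : Prop :=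
  forall J, R_ideal J -> (forall g, S g -> J g) -> J f.

(* sigma : x_ij |-> x_{i,j+1}  (shifts every monomial one column right) *)
Definition Rsigma (f : Rser) : Rser :=
  fun m => if val m is Some _ :: _ then 0 else f (mkmon (behead (val m))).
(* iota : x_{i_1}...x_{i_d} |-> x_{i_1 1} ... x_{i_d d}, extended linearly *)
Definition Riota (f : Fser) : Rser :=
  fun m => if all (fun o : option 'I_n => o != None) (val m)
           then f (pmap id (val m)) else 0.
(* f lies in R(d): only variables x_ij with j <= d occur *)
Definition inRd (d : nat) (f : Rser) : Prop :=
  forall m, (d < size (val m))%N -> f m = 0.

Definition Lideal (I : Fser -> Prop) : Rser -> Prop :=
  R_gen (fun g => exists k f, I f /\ g = iter k Rsigma (Riota f)).

Definition Jdd (J : Rser -> Prop) (d : nat) (f : Rser) : Prop :=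
  [/\ J f, inRd d f & Rhcomp d f =1 f].
Definition dsum_Jdd (J : Rser -> Prop) (f : Rser) : Prop :=
  R_finsupp f /\ forall d, Jdd J d (Rhcomp d f).
Definition Jgens (J : Rser -> Prop) (g : Rser) : Prop :=
  exists k f, dsum_Jdd J f /\ g = iter k Rsigma f.

End Defs.

From mathcomp Require Import all_boot all_order all_algebra.
From Stdlib Require Import FunctionalExtensionality.
From mathcomp Require Import zify.
Set Implicit Arguments. Unset Strict Implicit. Unset Printing Implicit Defensive.
Import GRing.Theory.
Local Open Scope ring_scope.

(* The map iota identifies F with the span of the monomials of R filling
   exactly the columns 1..d, and for a homogeneous of degree e,
   iota (a * f) = iota a * sigma^e (iota f).  Hence the preimage
   iota^-1(J) is a graded ideal of F; as J is sigma-stable and every element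
   of J(d)_d is an iota-image, J = L(iota^-1(J)).

   Uniqueness: if J = L(I') then I' is contained in iota^-1(J).  Conversely,
   read an element g of R along a pattern a, i.e. a partial filling of the
   columns: [extract d a g] is the polynomial of F collecting the
   coefficients of g on the monomials that complete a to a word of length d.
   The extraction of a product b * g is a combination of extractions of g along
   the patterns a + p, p a monomial of b; so the g in J all of whose
   extractions lie in I' form an ideal, which contains the generators
   sigma^k (iota h), h in I', hence all of J.  Extracting iota f along the
   empty pattern gives the homogeneous components of f. *)

Notation allN := (all (fun o : option _ => o == None)).
Notation allS := (all (fun o : option _ => o != None)).

Section Monomials.
Variable n : nat.
Notation sq := (seq (option 'I_n)).
Implicit Types (s t a b l r P : sq) (w : word n).

Lemma dropNone_cat l r :
  dropNone (l ++ r) = if dropNone l == [::] then dropNone r else dropNone l ++ r.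
Proof. by elim: l => [|[x|] l IH] //=. Qed.

Lemma trim_cons o s :
  trim (o :: s) = if (o == None) && (trim s == [::]) then [::] else o :: trim s.
Proof.
rewrite {1}/trim rev_cons -cats1 dropNone_cat.
have -> : trim s = rev (dropNone (rev s)) by [].
case: (dropNone (rev s)) => [|y D] /=; first by case: o.
have -> : rev (y :: D) == [::] = false by rewrite -size_eq0 size_rev.
by rewrite andbF -cat_cons rev_cat.
Qed.

Lemma canon_trimE s : canon s -> trim s = s.
Proof.
rewrite /canon /trim; case E: (rev s) => [|[x|] t] // _.
  by move: E => /(congr1 size); rewrite size_rev => /eqP; rewrite size_eq0 => /eqP.
by rewrite /= -E revK.
Qed.

Lemma trimK s : trim (trim s) = trim s.
Proof. exact/canon_trimE/canon_trim. Qed.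

Lemma mkmon_eq s t : (mkmon s = mkmon t) <-> (trim s = trim t).
Proof.
split; first by move=> /(congr1 val).
move=> E; rewrite /mkmon; move: (canon_trim s) (canon_trim t); rewrite E.
by move=> p q; rewrite (bool_irrelevance p q).
Qed.

Lemma mkmon_val (m : mon n) : mkmon (val m) = m.
Proof. by case: m => s c; apply: val_inj; rewrite /= canon_trimE. Qed.

Lemma mkmon_eqb s (m : mon n) : (mkmon s == m) = (trim s == trim (val m)).
Proof. by rewrite -{1}(mkmon_val m); apply/eqP/eqP => /mkmon_eq. Qed.

Lemma val_mkmon s : val (mkmon s) = trim s.
Proof. by []. Qed.

Lemma mkmon_trim s : mkmon (trim s) = mkmon s.
Proof. by apply/mkmon_eq; rewrite trimK. Qed.

Lemma trim_rcons s : trim (rcons s None) = trim s.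
Proof. by rewrite /trim rev_rcons. Qed.

Lemma trim_cons_eq o o' s t :
  (trim (o :: s) == trim (o' :: t)) = (o == o') && (trim s == trim t).
Proof.
rewrite !trim_cons; case: o => [x|]; case: o' => [y|] /=.
- by rewrite eqseq_cons.
- by case: ifP => /= _; rewrite ?andbF // eqseq_cons.
- by case: ifP => /= _; rewrite ?andbF // eqseq_cons.
case: ifP; case: ifP => //= /eqP A /eqP B.
- by rewrite A B eqxx.
- by rewrite B /=; apply/esym/negbTE/eqP => C; apply: A; rewrite -C.
- by rewrite A /=; apply/esym/negbTE/eqP => C; apply: B; rewrite C.
Qed.

Lemma trim_congr o s t : trim s = trim t -> trim (o :: s) = trim (o :: t).
Proof. by move=> E; rewrite !trim_cons E. Qed.

Lemma trim_headE s : trim s = trim (head None s :: behead s).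
Proof. by case: s. Qed.

Lemma trim_nseq k : trim (nseq k None) = [::] :> sq.
Proof. by elim: k => //= k IH; rewrite trim_cons IH. Qed.

Lemma trim_mapSome w : trim (map Some w) = map Some w.
Proof. by elim: w => //= x w IH; rewrite trim_cons IH. Qed.

Lemma trim_decomp s : s = trim s ++ nseq (size s - size (trim s)) None.
Proof.
elim: s => [|o s IH] //=; rewrite trim_cons.
case: ifP => [/andP[/eqP-> /eqP E]|_] /=; first by rewrite {1}IH E /= subn0.
by rewrite {1}IH.
Qed.

Lemma trim_cat s t : trim (s ++ t) = if trim t == [::] then trim s else s ++ trim t.
Proof.
elim: s => [|o s IH] /=; first by case: eqP.
rewrite trim_cons IH; case: (eqVneq (trim t) [::]) => ht /=; first by rewrite trim_cons.
have -> : (s ++ trim t == [::]) = false.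
  by apply/negbTE; rewrite -size_eq0 size_cat addn_eq0 negb_and [size (trim t) == 0%N]size_eq0 ht orbT.
by rewrite andbF.
Qed.

Lemma size_trim s : (size (trim s) <= size s)%N.
Proof. by rewrite {2}(trim_decomp s) size_cat leq_addr. Qed.

Lemma trim_id s : size (trim s) = size s -> trim s = s.
Proof. by move=> E; rewrite {2}(trim_decomp s) E subnn cats0. Qed.

Lemma nth_trim s j : nth None (trim s) j = nth None s j.
Proof.
rewrite {2}(trim_decomp s) nth_cat; case: ltnP => // h.
by rewrite nth_nseq if_same nth_default.
Qed.

Lemma nth_behead_None s j : nth None (behead s) j = nth None s j.+1.
Proof. by case: s => [|x s] //=; rewrite !nth_nil. Qed.

Lemma allN_cons s : allN s = (head None s == None) && allN (behead s).
Proof. by case: s. Qed.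

Lemma map_pmap_allS s : allS s -> map Some (pmap id s) = s.
Proof. by elim: s => [|[x|] s IH] //= /IH ->. Qed.

Lemma pmap_mapSome w : pmap id (map Some w) = w.
Proof. by elim: w => //= x w ->. Qed.

Lemma allS_mapSome w : allS (map Some w).
Proof. by elim: w. Qed.

Lemma size_pmap_allS s : allS s -> size (pmap id s) = size s.
Proof. by elim: s => [|[x|] s IH] //= /IH ->. Qed.

Lemma count_allS s : allS s -> count (fun o : option 'I_n => o != None) s = size (pmap id s).
Proof. by elim: s => [|[x|] s IH] //= /IH ->. Qed.

Lemma splits_prop s q : q \in splits s ->
  [/\ size q.1 = size s, size q.2 = size s &
   forall j, ((nth None q.1 j == None) && (nth None q.2 j == nth None s j)) ||
             ((nth None q.2 j == None) && (nth None q.1 j == nth None s j))].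
Proof.
elim: s q => [|[x|] s IH] q /=.
- by rewrite inE => /eqP -> /=; split => // j; rewrite !nth_nil eqxx.
- rewrite mem_cat => /orP[] /mapP [[a b] /IH [h1 h2 h3] ->] /=.
  + by split; rewrite ?h1 ?h2 // => -[|j] //=; rewrite eqxx.
  + by split; rewrite ?h1 ?h2 // => -[|j] //=; rewrite eqxx.
- move=> /mapP [[a b] /IH [h1 h2 h3] ->] /=.
  by split; rewrite ?h1 ?h2 // => -[|j] //=.
Qed.

(* [submon P s]: the monomial [P] divides [s]; [split_along P s] is then the
   pair [(P, s / P)] in the shape it takes inside [splits s]. *)
Fixpoint submon P s : bool :=
  match P with
  | [::] => true
  | y :: P' => ((y == None) || (y == head None s)) && submon P' (behead s)
  end.

Fixpoint split_along P s : sq * sq :=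
  match s with
  | [::] => ([::], [::])
  | x :: t => let p := split_along (behead P) t in
              if head None P == None then (None :: p.1, x :: p.2)
              else (x :: p.1, None :: p.2)
  end.

Lemma submon_cons P o t :
  submon P (o :: t) = ((head None P == None) || (head None P == o)) && submon (behead P) t.
Proof. by case: P. Qed.

Lemma submon_nil P : submon P [::] = allN P.
Proof. by elim: P => //= y P ->; rewrite orbb. Qed.

Lemma trim_eq_nil P : (trim P == [::]) = allN P.
Proof.
elim: P => [|y P IH] //=; rewrite trim_cons IH.
by case: y => [y|] //=; case: (allN P).
Qed.

Lemma submon_take e s : submon (take e s) s.
Proof. by elim: s e => [|x s IH] [|e] //=; rewrite eqxx orbT IH. Qed.

Lemma split_along_take e s :
  trim (split_along (take e s) s).1 = trim (take e s) /\
  trim (split_along (take e s) s).2 = trim (nseq e None ++ drop e s).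
Proof.
elim: s e => [|x s IH] e; first by rewrite /= cats0 trim_nseq.
case: e => [|e] /=.
  have [h1 h2] := IH 0%N; rewrite take0 drop0 in h1 h2.
  by split; [rewrite trim_cons h1 | apply: trim_congr].
have [h1 h2] := IH e.
by case: (eqVneq x None) => [->|hx] /=; split; apply: trim_congr.
Qed.

(* A pattern [a] prescribes the variables in some columns.  [fill_gaps a w]
   writes the letters of [w] into the successive columns, leaving empty
   those prescribed by [a]; [fits a w] says that [a] agrees with [w] on its
   prescribed columns, all of which lie within the first [size w]. *)
Fixpoint fill_gaps a w : sq :=
  match w with
  | [::] => [::]
  | x :: w' => (if head None a == None then Some x else None) :: fill_gaps (behead a) w'
  end.

Fixpoint fits a w : bool :=
  match w with
  | [::] => allN a
  | x :: w' => ((head None a == None) || (head None a == Some x)) && fits (behead a) w'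
  end.

Fixpoint disjoint_pat a P : bool :=
  match a with
  | [::] => true
  | y :: a' => ((y == None) || (head None P == None)) && disjoint_pat a' (behead P)
  end.

Fixpoint merge_pat a P : sq :=
  match a with
  | [::] => P
  | y :: a' => (if y is Some _ then y else head None P) :: merge_pat a' (behead P)
  end.

Lemma disjoint_pat_cons a P : disjoint_pat a P =
  ((head None a == None) || (head None P == None)) && disjoint_pat (behead a) (behead P).
Proof. by case: a. Qed.

Lemma head_merge_pat a P :
  head None (merge_pat a P) = if head None a is Some y then Some y else head None P.
Proof. by case: a => [|[y|] a]. Qed.

Lemma behead_merge_pat a P : behead (merge_pat a P) = merge_pat (behead a) (behead P).
Proof. by case: a. Qed.

Lemma allN_merge_pat a P : allN a && allN P = disjoint_pat a P && allN (merge_pat a P).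
Proof.
elim: a P => [|y a IH] P //=.
rewrite [allN P]allN_cons; case: y => [y|] /=; first by rewrite !andbF.
by case: (head None P == None); rewrite /= ?andbF // IH.
Qed.

Lemma fits_submon a P w :
  fits a w && submon P (fill_gaps a w) = disjoint_pat a P && fits (merge_pat a P) w.
Proof.
elim: w a P => [|x w IH] a P /=; first by rewrite submon_nil allN_merge_pat.
rewrite submon_cons disjoint_pat_cons head_merge_pat behead_merge_pat.
have andb_pairs (h1 h2 h3 h4 A B C D : bool) : A && B = C && D ->
    h1 && h2 = h3 && h4 -> (h1 && A) && (h2 && B) = (h3 && C) && (h4 && D).
  by case: h1; case: h2; case: h3; case: h4; case: A; case: B; case: C; case: D.
apply: andb_pairs; first exact: IH.
by move: (head None a) (head None P) => [ya|] [yp|]; rewrite /= ?orbF ?andbT ?andbF.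
Qed.

Lemma split_along_fill_gaps a P w :
  (split_along P (fill_gaps a w)).2 = fill_gaps (merge_pat a P) w.
Proof.
elim: w a P => [|x w IH] a P //=.
rewrite head_merge_pat behead_merge_pat IH.
by move: (head None a) (head None P) => [ya|] [yp|].
Qed.

Lemma fits_drop a w : fits a w -> allN (drop (size w) a).
Proof.
elim: w a => [|x w IH] a /=; first by rewrite drop0.
by case/andP => _ /IH; case: a.
Qed.

Lemma fits_allN a w : allN a -> fits a w.
Proof. by elim: w a => [|x w IH] [|y a] //= => [|/andP [/eqP -> h]]; rewrite ?IH //; apply: IH. Qed.

Lemma fits_rcons a w x :
  fits a (rcons w x) =
  [&& fits (take (size w) a) w,
      (nth None a (size w) == None) || (nth None a (size w) == Some x)
    & allN (drop (size w).+1 a)].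
Proof.
elim: w a => [|y w IH] a /=; first by case: a => [|z a] //=; rewrite drop0 andbC.
case: a => [|z a] /=; rewrite IH andbA //.
by rewrite nth_nil /= !andbT.
Qed.

Lemma fill_gaps_rcons a w x : fill_gaps a (rcons w x) =
  rcons (fill_gaps a w) (if nth None a (size w) == None then Some x else None).
Proof.
elim: w a => [|y w IH] a /=; first by case: a.
by rewrite IH nth_behead_None.
Qed.

Lemma fill_gaps_take a w : fill_gaps (take (size w) a) w = fill_gaps a w.
Proof. by elim: w a => [|x w IH] [|y a] //=; rewrite IH. Qed.

Lemma allS_fill_gaps a w : allS (fill_gaps a w) = allN (take (size w) a).
Proof. by elim: w a => [|x w IH] [|y a] //=; rewrite IH; case: y. Qed.

Lemma fill_gaps_allN a w : allN (take (size w) a) -> fill_gaps a w = map Some w.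
Proof.
elim: w a => [|x w IH] [|y a] //=; first by move=> _; rewrite (IH [::]) //; case: (size w).
by case/andP => /eqP -> /IH ->.
Qed.

End Monomials.

Section Algebra.
Variables (K : fieldType) (n : nat).
Notation sq := (seq (option 'I_n)).
Implicit Types (s t : sq) (u w : word n) (f g X : Fser K n).

Lemma splits_rcons s :
  splits (rcons s None) = [seq (rcons p.1 None, rcons p.2 None) | p <- splits s].
Proof.
elim: s => [|[x|] s IH] //=; rewrite IH -?map_comp //.
by rewrite map_cat -!map_comp.
Qed.

Lemma sum_splits_cat_nseq (G : sq -> sq -> K) s k :
  (forall p q, G (rcons p None) (rcons q None) = G p q) ->
  \sum_(p <- splits (s ++ nseq k None)) G p.1 p.2 = \sum_(p <- splits s) G p.1 p.2.
Proof.
move=> HG; elim: k s => [|k IH] s; first by rewrite cats0.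
by rewrite -cat_rcons IH splits_rcons big_map; apply: eq_bigr => p _ /=.
Qed.

(* Unlike the definition of [Rmul], this holds for non-canonical [s] too. *)
Lemma Rmul_mkmon (f g : Rser K n) s :
  Rmul f g (mkmon s) = \sum_(p <- splits s) f (mkmon p.1) * g (mkmon p.2).
Proof.
rewrite /Rmul val_mkmon [in RHS](trim_decomp s).
rewrite (@sum_splits_cat_nseq (fun a b => f (mkmon a) * g (mkmon b))) //.
by move=> p q /=; rewrite !(proj2 (mkmon_eq (rcons _ None) _) (trim_rcons _)).
Qed.

Lemma sum_splits_swap (G : sq -> sq -> K) s :
  \sum_(p <- splits s) G p.1 p.2 = \sum_(p <- splits s) G p.2 p.1.
Proof.
elim: s G => [|[x|] s IH] G /=; rewrite ?big_cat ?big_map /=.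
- by rewrite !big_seq1.
- rewrite addrC; congr (_ + _).
  + exact: (IH (fun a b => G (None :: a) (Some x :: b))).
  + exact: (IH (fun a b => G (Some x :: a) (None :: b))).
- exact: (IH (fun a b => G (None :: a) (None :: b))).
Qed.

Lemma RmulC (f g : Rser K n) : Rmul f g = Rmul g f.
Proof.
apply: functional_extensionality_dep => m.
rewrite /Rmul (@sum_splits_swap (fun a b => f (mkmon a) * g (mkmon b))).
by apply: eq_bigr => p _; rewrite mulrC.
Qed.

Lemma sum_splits_submon (G : sq -> sq -> K) s P :
  \sum_(p <- splits s) (if trim p.1 == trim P then G p.1 p.2 else 0) =
  if submon P s then G (split_along P s).1 (split_along P s).2 else 0.
Proof.
elim: s G P => [|x s IH] G P.
  by rewrite /= big_seq1 submon_nil -trim_eq_nil /= eq_sym.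
rewrite submon_cons /=.
under eq_bigr do rewrite [trim P]trim_headE.
move: (head None P) (behead P) => y P'.
case: x => [x|]; rewrite ?big_cat !big_map /=.
- under eq_bigr do rewrite trim_cons_eq.
  under [X in _ + X]eq_bigr do rewrite trim_cons_eq.
  case: y => [y|] /=; rewrite big1_eq.
  + case: (eqVneq x y) => [<-|hx] /=.
      by rewrite eqxx /= addr0; exact: (IH (fun a b => G (Some x :: a) (None :: b)) P').
    have E1 : (Some x == Some y) = false by apply/negbTE; apply: contra hx => /eqP[->].
    by rewrite E1 eq_sym E1 /= addr0 big1.
  + by rewrite add0r; exact: (IH (fun a b => G (None :: a) (Some x :: b)) P').
- under eq_bigr do rewrite trim_cons_eq.
  rewrite orbb; case: y => [y|] /=; first by rewrite big1.
  exact: (IH (fun a b => G (None :: a) (None :: b)) P').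
Qed.

Lemma Rsigma_mkmon (f : Rser K n) s :
  Rsigma f (mkmon s) = if head None s is Some _ then 0 else f (mkmon (behead s)).
Proof.
rewrite /Rsigma val_mkmon; case: s => [|[x|] s] //=; rewrite trim_cons //=.
case: ifP => [/eqP E|_] //=; last by rewrite mkmon_trim.
by congr f; apply/mkmon_eq; rewrite E.
Qed.

Lemma iter_Rsigma_mkmon k (f : Rser K n) s :
  iter k (@Rsigma K n) f (mkmon s) =
  if allN (take k s) then f (mkmon (drop k s)) else 0.
Proof.
elim: k s => [|k IH] s; first by rewrite take0 drop0.
by rewrite iterS Rsigma_mkmon; case: s => [|[x|] s] //=.
Qed.

Definition Fdelta u : Fser K n := fun w => if w == u then 1 else 0.
Definition Fconst (c : K) : Fser K n := fun w => if w == [::] then c else 0.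
Definition Fscale (c : K) (f : Fser K n) : Fser K n := Fmul (Fconst c) f.
Definition Fhomog (e : nat) (f : Fser K n) := forall w, f w != 0 -> size w = e.

Lemma Fmul_homogl e (p q : Fser K n) w :
  Fhomog e p -> Fmul p q w = p (take e w) * q (drop e w).
Proof.
move=> hp; rewrite /Fmul (eq_bigr (fun i : 'I_(size w).+1 =>
  if (i : nat) == e then p (take e w) * q (drop e w) else 0)); last first.
  move=> i _; case: eqVneq => [->|hi] //.
  case: (eqVneq (p (take i w)) 0) => [->|/hp]; first by rewrite mul0r.
  by rewrite size_take_min => E; move: hi (ltn_ord i); rewrite -E; lia.
rewrite -big_mkcond (big_ord1_eq _ (fun=> p (take e w) * q (drop e w))).
case: ifP => // he.
case: (eqVneq (p (take e w)) 0) => [->|/hp]; first by rewrite mul0r.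
by rewrite size_take_min; lia.
Qed.

Lemma Fmul_homogr e (p q : Fser K n) w : Fhomog e q ->
  Fmul p q w = p (take (size w - e) w) * q (drop (size w - e) w).
Proof.
move=> hq; rewrite /Fmul (eq_bigr (fun i : 'I_(size w).+1 =>
  if (i : nat) == (size w - e)%N then p (take (size w - e) w) * q (drop (size w - e) w)
  else 0)); last first.
  move=> i _; case: eqVneq => [->|hi] //.
  case: (eqVneq (q (drop i w)) 0) => [->|/hq]; first by rewrite mulr0.
  by rewrite size_drop => E; move: hi (ltn_ord i); rewrite -E; lia.
by rewrite -big_mkcond (big_ord1_eq _ (fun=> p (take (size w - e) w) * q (drop (size w - e) w)))
  ltnS leq_subr.
Qed.

Lemma Fhomog_delta u : Fhomog (size u) (Fdelta u).
Proof. by move=> w; rewrite /Fdelta; case: (eqVneq w u) => [->|]; rewrite ?eqxx. Qed.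

Lemma Fmul_deltal u X w :
  Fmul (Fdelta u) X w = if take (size u) w == u then X (drop (size u) w) else 0.
Proof. by rewrite (Fmul_homogl _ _ (@Fhomog_delta u)) /Fdelta; case: eqP; rewrite ?mul1r ?mul0r. Qed.

Lemma Fmul_deltar_rcons z X w x :
  Fmul X (Fdelta [:: z]) (rcons w x) = if x == z then X w else 0.
Proof.
rewrite (Fmul_homogr _ _ (@Fhomog_delta [:: z])) size_rcons subn1 /=.
rewrite -cats1 take_size_cat // drop_size_cat // /Fdelta eqseq_cons andbT.
by case: eqP; rewrite ?mulr1 ?mulr0.
Qed.

Lemma Fmul_deltar_nil z X : Fmul X (Fdelta [:: z]) [::] = 0.
Proof. by rewrite /Fmul big_ord1 /Fdelta mulr0. Qed.

Lemma FscaleE (c : K) f w : Fscale c f w = c * f w.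
Proof.
have h0 : Fhomog 0 (Fconst c).
  by move=> v; rewrite /Fconst; case: (eqVneq v [::]) => [->|]; rewrite ?eqxx.
by rewrite /Fscale (Fmul_homogl _ _ h0) take0 drop0.
Qed.

Lemma Fhcomp_homog e f : Fhomog e (Fhcomp e f).
Proof. by move=> w; rewrite /Fhcomp; case: (eqVneq (size w) e) => // _; rewrite eqxx. Qed.

Definition Fsuml (T : Type) (r : seq T) (h : T -> Fser K n) : Fser K n :=
  fun w => \sum_(x <- r) h x w.

Lemma Fsuml_nil (T : Type) (h : T -> Fser K n) : Fsuml [::] h = @Fzero K n.
Proof. by apply: functional_extensionality_dep => w; rewrite /Fsuml big_nil. Qed.

Lemma Fsuml_cons (T : Type) x r (h : T -> Fser K n) :
  Fsuml (x :: r) h = Fadd (h x) (Fsuml r h).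
Proof. by apply: functional_extensionality_dep => w; rewrite /Fsuml big_cons. Qed.

Lemma Fmul_sumll (T : Type) r (h : T -> Fser K n) g :
  Fmul (Fsuml r h) g = Fsuml r (fun x => Fmul (h x) g).
Proof.
apply: functional_extensionality_dep => w; rewrite /Fsuml /Fmul.
rewrite (exchange_big_dep xpredT) //=; apply: eq_bigr => i _.
by rewrite big_distrl.
Qed.

Lemma Fhcomp_sum f : F_finsupp f -> exists B, f = Fsuml (iota 0 B) (fun d => Fhcomp d f).
Proof.
move=> [s hs]; exists (\max_(w <- s) (size w).+1)%N.
apply: functional_extensionality_dep => w; rewrite /Fsuml /Fhcomp.
case: (eqVneq (f w) 0) => [E|/hs ws]; first by rewrite big1 // => d _; case: ifP.
rewrite (bigD1_seq (size w)) /= ?iota_uniq ?eqxx //; last first.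
  by rewrite mem_iota add0n; exact: (@leq_bigmax_seq _ s xpredT (fun w => (size w).+1) w ws isT).
by rewrite big1 ?addr0 // => d hd; case: (eqVneq (size w) d) => // E; rewrite E eqxx in hd.
Qed.

Lemma finsupp_delta u : F_finsupp (Fdelta u).
Proof. by exists [:: u] => w; rewrite /Fdelta; case: (eqVneq w u) => [->|]; rewrite ?inE ?eqxx. Qed.

Lemma finsupp_const (c : K) : F_finsupp (Fconst c).
Proof. by exists [:: [::]] => w; rewrite /Fconst; case: (eqVneq w [::]) => [->|]; rewrite ?inE ?eqxx. Qed.

Lemma finsupp_add f g : F_finsupp f -> F_finsupp g -> F_finsupp (Fadd f g).
Proof.
move=> [s1 h1] [s2 h2]; exists (s1 ++ s2) => w; rewrite /Fadd mem_cat.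
by case: (eqVneq (f w) 0) => [->|/h1 -> //]; rewrite add0r => /h2 ->; rewrite orbT.
Qed.

Lemma finsupp_hcomp d f : F_finsupp f -> F_finsupp (Fhcomp d f).
Proof. by move=> [s h]; exists s => w; rewrite /Fhcomp; case: ifP => _; [exact: h | rewrite eqxx]. Qed.

Lemma finsupp_mul f g : F_finsupp f -> F_finsupp g -> F_finsupp (Fmul f g).
Proof.
move=> [s1 h1] [s2 h2]; exists [seq x.1 ++ x.2 | x <- [seq (a, b) | a <- s1, b <- s2]] => w.
rewrite /Fmul => H.
have [i] : exists i : 'I_(size w).+1, f (take i w) * g (drop i w) != 0.
  apply/existsP; apply: contraNT H => /existsPn Hn.
  by rewrite big1 // => i _; move: (Hn i); rewrite negbK => /eqP.
rewrite mulf_eq0 negb_or => /andP[ha hb].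
rewrite -(cat_take_drop i w); apply/mapP; exists (take i w, drop i w) => //.
by apply/allpairsP; exists (take i w, drop i w); split => //; [exact: h1 | exact: h2].
Qed.

Definition Rsuml (T : Type) (r : seq T) (h : T -> Rser K n) : Rser K n :=
  fun m => \sum_(x <- r) h x m.

Lemma Rsuml_nil (T : Type) (h : T -> Rser K n) : Rsuml [::] h = @Rzero K n.
Proof. by apply: functional_extensionality_dep => w; rewrite /Rsuml big_nil. Qed.

Lemma Rsuml_cons (T : Type) x r (h : T -> Rser K n) :
  Rsuml (x :: r) h = Radd (h x) (Rsuml r h).
Proof. by apply: functional_extensionality_dep => w; rewrite /Rsuml big_cons. Qed.

Lemma Rsigma_finsupp (f : Rser K n) : R_finsupp f -> R_finsupp (Rsigma f).
Proof.
move=> [S hS]; exists [seq mkmon (None :: val p) | p <- S] => m.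
rewrite -(mkmon_val m) Rsigma_mkmon; case E: (val m) => [|[x|] t] //=.
- move/hS => h; apply/mapP; exists (mkmon [::]) => //.
  by apply/mkmon_eq.
- by rewrite eqxx.
- move/hS => h; apply/mapP; exists (mkmon t) => //.
  by apply/mkmon_eq; rewrite val_mkmon !trim_cons trimK.
Qed.

Lemma iter_Rsigma_finsupp k (f : Rser K n) :
  R_finsupp f -> R_finsupp (iter k (@Rsigma K n) f).
Proof. by elim: k => //= k IH /IH; exact: Rsigma_finsupp. Qed.

Lemma Riota_mkmon (f : Fser K n) s :
  Riota f (mkmon s) = if allS (trim s) then f (pmap id (trim s)) else 0.
Proof. by []. Qed.

Lemma Riota_mapSome (f : Fser K n) w : Riota f (mkmon (map Some w)) = f w.
Proof. by rewrite Riota_mkmon trim_mapSome allS_mapSome pmap_mapSome. Qed.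

Lemma Riota_add (f g : Fser K n) : Riota (Fadd f g) = Radd (Riota f) (Riota g).
Proof.
apply: functional_extensionality_dep => m.
by rewrite /Riota /Radd /Fadd; case: ifP; rewrite ?addr0.
Qed.

Lemma Riota_zero : Riota (@Fzero K n) = @Rzero K n.
Proof. by apply: functional_extensionality_dep => m; rewrite /Riota; case: ifP. Qed.

Lemma Riota_suml (T : Type) r (h : T -> Fser K n) :
  Riota (Fsuml r h) = Rsuml r (fun x => Riota (h x)).
Proof.
elim: r => [|x r IH]; first by rewrite Fsuml_nil Rsuml_nil Riota_zero.
by rewrite Fsuml_cons Rsuml_cons Riota_add IH.
Qed.

Lemma Riota_hcomp d (f : Fser K n) : Riota (Fhcomp d f) = Rhcomp d (Riota f).
Proof.
apply: functional_extensionality_dep => m; rewrite /Riota /Rhcomp /Fhcomp /mdeg.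
by case: ifP => H; [rewrite count_allS | case: ifP].
Qed.

Lemma Riota_finsupp (f : Fser K n) : F_finsupp f -> R_finsupp (Riota f).
Proof.
move=> [S hS]; exists [seq mkmon (map Some w) | w <- S] => m; rewrite /Riota.
case: ifP => [H /hS hw|]; last by rewrite eqxx.
by apply/mapP; exists (pmap id (val m)) => //; rewrite map_pmap_allS // mkmon_val.
Qed.

Lemma splits_Riota_shift (p q : Fser K n) e s x : Fhomog e p -> x \in splits s ->
  Riota p (mkmon x.1) * iter e (@Rsigma K n) (Riota q) (mkmon x.2) != 0 ->
  trim x.1 = trim (take e s).
Proof.
move=> hp /splits_prop [s1 s2 s3]; rewrite mulf_eq0 negb_or => /andP [].
rewrite Riota_mkmon iter_Rsigma_mkmon; case: ifP => [hA|]; last by rewrite eqxx.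
move=> /hp hsz; case: ifP => [hB _|]; last by rewrite eqxx.
rewrite size_pmap_allS // in hsz.
have he : (e <= size s)%N by rewrite -hsz -s1 size_trim.
suff E : trim x.1 = take e s by rewrite -E trimK.
apply: (@eq_from_nth _ None); first by rewrite size_take_min hsz; lia.
move=> j; rewrite hsz => hj; rewrite nth_take // nth_trim.
have hnn : nth None x.1 j != None.
  by rewrite -nth_trim; move/allP: hA; apply; apply: mem_nth; rewrite hsz.
by move: (s3 j); rewrite (negbTE hnn) /= => /andP [_ /eqP].
Qed.

(* Only the split of [s] at column [e] contributes, since the first factor
   lives in the columns [<= e] and the second one in the columns [> e]. *)
Lemma Rmul_Riota_shift_mkmon (p q : Fser K n) e s : Fhomog e p ->
  Rmul (Riota p) (iter e (@Rsigma K n) (Riota q)) (mkmon s) =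
  Riota p (mkmon (take e s)) * Riota q (mkmon (drop e s)).
Proof.
move=> hp; rewrite Rmul_mkmon.
set T := fun a b => Riota p (mkmon a) * iter e (@Rsigma K n) (Riota q) (mkmon b).
rewrite (eq_big_seq (fun x => if trim x.1 == trim (take e s) then T x.1 x.2 else 0)).
  rewrite sum_splits_submon submon_take.
  have [h1 h2] := split_along_take e s.
  rewrite /T (proj2 (mkmon_eq _ _) h1) (proj2 (mkmon_eq _ _) h2) iter_Rsigma_mkmon.
  rewrite take_size_cat ?size_nseq // drop_size_cat ?size_nseq //.
  by rewrite all_nseq eqxx orbT.
move=> x hx; case: (eqVneq (trim x.1) (trim (take e s))) => // hne.
case: (eqVneq (T x.1 x.2) 0) => // /(splits_Riota_shift hp hx) E.
by rewrite E eqxx in hne.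
Qed.

Lemma Riota_mul (p q : Fser K n) e : Fhomog e p ->
  Riota (Fmul p q) = Rmul (Riota p) (iter e (@Rsigma K n) (Riota q)).
Proof.
move=> hp; apply: functional_extensionality_dep => m.
rewrite -[in RHS](mkmon_val m) Rmul_Riota_shift_mkmon //.
have cs : trim (val m) = val m by apply: canon_trimE; exact: valP.
rewrite /Riota !val_mkmon; case: (boolP (allS (val m))) => hA.
  rewrite -(map_pmap_allS hA) -map_take -map_drop !trim_mapSome !allS_mapSome !pmap_mapSome.
  exact: Fmul_homogl.
case: ifP => hT; last by rewrite mul0r.
case: (eqVneq (p (pmap id (trim (take e (val m))))) 0) => [->|hpv]; first by rewrite mul0r.
case: ifP => hD; last by rewrite mulr0.
have hsz := hp _ hpv; rewrite size_pmap_allS // in hsz.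
have E1 : trim (take e (val m)) = take e (val m).
  by apply: trim_id; apply/eqP; rewrite eqn_leq size_trim hsz size_take_min geq_minl.
move: hA; rewrite -cs -{1}(cat_take_drop e (val m)) trim_cat E1.
by case: ifP => _; rewrite ?all_cat -E1 ?hT ?hD.
Qed.

End Algebra.

Section Ideals.
Variables (K : fieldType) (n : nat).

Section FIdeal.
Variable I : Fser K n -> Prop.
Hypothesis HI : F_ideal I.

Lemma Fideal_suml (T : eqType) (r : seq T) (h : T -> Fser K n) :
  (forall x, x \in r -> I (h x)) -> I (Fsuml r h).
Proof.
case: HI => _ I0 ID _ _.
elim: r => [|x r IH] Hr; first by rewrite Fsuml_nil.
rewrite Fsuml_cons; apply: ID; first by apply: Hr; rewrite inE eqxx.
by apply: IH => y hy; apply: Hr; rewrite inE hy orbT.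
Qed.

Lemma Fideal_scale c f : I f -> I (Fscale c f).
Proof. by case: HI => _ _ _ IM _ If; apply: IM => //; exact: finsupp_const. Qed.

Lemma Fideal_mul_deltal u f : I f -> I (Fmul (Fdelta K u) f).
Proof. by case: HI => _ _ _ IM _ If; apply: IM => //; exact: finsupp_delta. Qed.

Lemma Fideal_mul_deltar u f : I f -> I (Fmul f (Fdelta K u)).
Proof. by case: HI => _ _ _ _ IM If; apply: IM => //; exact: finsupp_delta. Qed.

End FIdeal.

Lemma Rideal_suml (J : Rser K n -> Prop) (T : eqType) (r : seq T) (h : T -> Rser K n) :
  R_ideal J -> (forall x, x \in r -> J (h x)) -> J (Rsuml r h).
Proof.
case=> _ J0 JD _.
elim: r => [|x r IH] Hr; first by rewrite Rsuml_nil.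
rewrite Rsuml_cons; apply: JD; first by apply: Hr; rewrite inE eqxx.
by apply: IH => y hy; apply: Hr; rewrite inE hy orbT.
Qed.

Lemma R_gen_ideal (S J : Rser K n -> Prop) :
  R_ideal J -> (forall g, S g -> J g) -> R_ideal (R_gen S).
Proof.
move=> HJ HS; split.
- by move=> f Hf; case: (HJ) => JF _ _ _; apply: JF; apply: Hf.
- by move=> J' [].
- by move=> f g Hf Hg J' HJ' HS'; case: (HJ') => _ _ JD _; apply: JD; [apply: Hf | apply: Hg].
- by move=> a f ha Hf J' HJ' HS'; case: (HJ') => _ _ _ JM; apply: JM => //; apply: Hf.
Qed.

Lemma R_gen_sub (S : Rser K n -> Prop) g : S g -> R_gen S g.
Proof. by move=> Sg J _ HS; exact: HS. Qed.

Lemma Lideal_gen (I : Fser K n -> Prop) k f :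
  I f -> Lideal I (iter k (@Rsigma K n) (Riota f)).
Proof. by move=> If; apply: R_gen_sub; exists k, f. Qed.

Lemma Lideal_min (I : Fser K n -> Prop) (J : Rser K n -> Prop) : R_ideal J ->
  (forall k f, I f -> J (iter k (@Rsigma K n) (Riota f))) -> forall g, Lideal I g -> J g.
Proof. by move=> HJ HIJ g; apply => // _ [k [f [If ->]]]; exact: HIJ. Qed.

End Ideals.

Section Existence.
Variables (K : fieldType) (n : nat) (J : Rser K n -> Prop).
Hypothesis HJ : R_graded_ideal J.
Hypothesis HS : forall f, J f -> J (Rsigma f).

Definition iota_preimage (f : Fser K n) := F_finsupp f /\ J (Riota f).

Lemma iter_Rsigma_stable k f : J f -> J (iter k (@Rsigma K n) f).
Proof. by elim: k => //= k IH /IH; exact: HS. Qed.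

Lemma iota_preimage_graded : F_graded_ideal iota_preimage.
Proof.
case: HJ => [[JF J0 JD JM] JH]; split; last first.
  by move=> f d [hf Jf]; split; [exact: finsupp_hcomp | rewrite Riota_hcomp; exact: JH].
split.
- by move=> f [].
- by split; [exists [::] => w; rewrite /Fzero eqxx | rewrite Riota_zero].
- move=> f g [hf Jf] [hg Jg]; split; first exact: finsupp_add.
  by rewrite Riota_add; exact: JD.
- move=> a f ha [hf Jf]; split; first exact: finsupp_mul.
  have [B ->] := Fhcomp_sum ha.
  rewrite Fmul_sumll Riota_suml; apply: Rideal_suml => // e _.
  rewrite (Riota_mul _ (@Fhcomp_homog _ _ e a)); apply: JM; last exact: iter_Rsigma_stable.
  by apply: Riota_finsupp; exact: finsupp_hcomp.
- move=> f a ha [hf Jf]; split; first exact: finsupp_mul.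
  have [B ->] := Fhcomp_sum hf.
  rewrite Fmul_sumll Riota_suml; apply: Rideal_suml => // e _.
  rewrite (Riota_mul _ (@Fhcomp_homog _ _ e f)) RmulC; apply: JM.
    by apply: iter_Rsigma_finsupp; exact: Riota_finsupp.
  by rewrite Riota_hcomp; exact: JH.
Qed.

(* A monomial of degree [d] in [R(d)] fills all the columns [1..d]. *)
Lemma dsum_Jdd_Riota f : dsum_Jdd J f -> f = Riota (fun w => f (mkmon (map Some w))).
Proof.
move=> [_ hd]; apply: functional_extensionality_dep => m; rewrite /Riota.
case: ifP => hA; first by rewrite map_pmap_allS // mkmon_val.
have [_ hin _] := hd (mdeg m).
rewrite -(hin m) /Rhcomp ?eqxx // /mdeg.
by rewrite ltn_neqAle count_size andbT -all_count hA.
Qed.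

Lemma finsupp_dsum_Jdd f : dsum_Jdd J f -> F_finsupp (fun w => f (mkmon (map Some w))).
Proof.
move=> [[S hS] _]; exists [seq pmap id (val p) | p <- S] => w /hS h.
by apply/mapP; exists (mkmon (map Some w)) => //; rewrite val_mkmon trim_mapSome pmap_mapSome.
Qed.

Hypothesis Hgen : forall f, J f <-> R_gen (Jgens J) f.

Lemma Lideal_iota_preimage f : J f <-> Lideal iota_preimage f.
Proof.
have HJideal : R_ideal J by case: HJ.
split; last first.
  by apply: Lideal_min => // k g [_ Jg]; exact: iter_Rsigma_stable.
move=> /Hgen; apply.
  apply: (R_gen_ideal HJideal) => _ [k [g [[_ Jg] ->]]].
  exact: iter_Rsigma_stable.
move=> _ [k [g [Hd ->]]]; rewrite (dsum_Jdd_Riota Hd); apply: Lideal_gen.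
split; first exact: finsupp_dsum_Jdd.
rewrite -(dsum_Jdd_Riota Hd); apply/Hgen; apply: R_gen_sub.
by exists 0%N, g.
Qed.

End Existence.

Section Extract.
Variables (K : fieldType) (n : nat).
Notation sq := (seq (option 'I_n)).
Implicit Types (a P : sq) (w : word n) (b g : Rser K n) (h X : Fser K n).

Definition extract (d : nat) a g : Fser K n :=
  fun w => if (size w == d) && fits a w then g (mkmon (fill_gaps a w)) else 0.

Lemma extract_Rzero d a : extract d a (@Rzero K n) = @Fzero K n.
Proof. by apply: functional_extensionality_dep => w; rewrite /extract; case: ifP. Qed.

Lemma extract_Radd d a g1 g2 :
  extract d a (Radd g1 g2) = Fadd (extract d a g1) (extract d a g2).
Proof.
apply: functional_extensionality_dep => w.
by rewrite /extract /Fadd /Radd; case: ifP; rewrite ?addr0.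
Qed.

Lemma sum_supp_eq b (U : seq (mon n)) : uniq U -> (forall m, b m != 0 -> m \in U) ->
  forall m, b m = \sum_(p <- U) (if m == p then b p else 0).
Proof.
move=> hU hb m; case: (boolP (m \in U)) => hm.
  rewrite (bigD1_seq m) //= eqxx big1 ?addr0 // => p hp.
  by rewrite eq_sym (negbTE hp).
have -> : b m = 0 by apply/eqP; apply: contraR hm; exact: hb.
rewrite big_seq big1 // => p hp; case: (eqVneq m p) => // E.
by rewrite E hp in hm.
Qed.

Lemma extract_Rmul d a b g (U : seq (mon n)) : uniq U -> (forall m, b m != 0 -> m \in U) ->
  extract d a (Rmul b g) = Fsuml U (fun p =>
    Fscale (if disjoint_pat a (val p) then b p else 0) (extract d (merge_pat a (val p)) g)).
Proof.
move=> hU hb; apply: functional_extensionality_dep => w; rewrite /extract /Fsuml.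
under eq_bigr do rewrite FscaleE.
case: ifP => hc.
- rewrite Rmul_mkmon; set c := fill_gaps a w.
  transitivity (\sum_(x <- splits c) \sum_(p <- U)
      (if trim x.1 == trim (val p) then b p * g (mkmon x.2) else 0)).
    apply: eq_bigr => x _; rewrite (sum_supp_eq hU hb (mkmon x.1)) mulr_suml.
    by apply: eq_bigr => p _; rewrite mkmon_eqb; case: ifP; rewrite ?mul0r.
  rewrite exchange_big; apply: eq_bigr => p _.
  rewrite (@sum_splits_submon K _ (fun _ y => b p * g (mkmon y)) c (val p)).
  rewrite /c split_along_fill_gaps.
  move/andP: hc => [hs hm]; have := fits_submon a (val p) w; rewrite hm hs /= => ->.
  by case: (disjoint_pat _ _); case: (fits _ _); rewrite ?mulr0 ?mul0r.
- rewrite big1 // => p _.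
  case E: ((size w == d) && fits (merge_pat a (val p)) w); last by rewrite mulr0.
  move/andP: E => [hs hm]; move: hc; rewrite hs /= => hc.
  by have := fits_submon a (val p) w; rewrite hc hm andbT /= => <-; rewrite mul0r.
Qed.

Lemma extract0_Rsigma a g : extract 0 a (Rsigma g) = extract 0 a g.
Proof.
apply: functional_extensionality_dep => w; rewrite /extract.
by case: w => [|x w] //=; rewrite Rsigma_mkmon.
Qed.

Lemma extractS_Rsigma d a g : extract d.+1 a (Rsigma g) =
  if head None a is Some y then Fmul (Fdelta K [:: y]) (extract d (behead a) g)
  else @Fzero K n.
Proof.
apply: functional_extensionality_dep => w.
case E: (head None a) => [y|]; last first.
  rewrite /extract /Fzero; case: w => [|x w] //=; rewrite E /=.
  by case: ifP => // _; rewrite Rsigma_mkmon.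
rewrite Fmul_deltal /extract /=; case: w => [|x w] //=; rewrite E /= take0 drop0.
rewrite Rsigma_mkmon /= eqseq_cons andbT.
case: (eqVneq y x) => [->|h]; rewrite ?eqxx ?andbF //=.
have -> : (Some y == Some x) = false by apply/negbTE; apply: contra h => /eqP [->].
by rewrite andbF.
Qed.

Lemma extract_tail d a g : ~~ allN (drop d a) -> extract d a g = @Fzero K n.
Proof.
move=> h; apply: functional_extensionality_dep => w; rewrite /extract /Fzero.
case: eqP => // E; case: ifP => // /fits_drop; rewrite E => h'.
by rewrite h' in h.
Qed.

Lemma extract0_Riota a h :
  extract 0 a (Riota h) = if allN a then Fhcomp 0 h else @Fzero K n.
Proof.
apply: functional_extensionality_dep => w; rewrite /extract /Fhcomp.
by case: w => [|x w] /=; case: ifP.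
Qed.

Lemma extractS_Riota_Some d a z h :
  nth None a d = Some z -> allN (drop d.+1 a) ->
  extract d.+1 a (Riota h) = Fmul (extract d (take d a) (Riota h)) (Fdelta K [:: z]).
Proof.
move=> hz hd; apply: functional_extensionality_dep => w.
case: (lastP w) => [|w' x]; first by rewrite Fmul_deltar_nil /extract.
rewrite Fmul_deltar_rcons /extract size_rcons eqSS.
case: (eqVneq (size w') d) => [E|]; last by case: ifP.
rewrite fits_rcons fill_gaps_rcons E hz hd /= andbT.
rewrite (proj2 (mkmon_eq _ _) (trim_rcons _)) -E fill_gaps_take E.
case: (eqVneq x z) => [->|hx]; first by rewrite eqxx andbT.
have -> : (Some z == Some x) = false by apply/negbTE; apply: contra hx => /eqP [->].
by rewrite andbF.
Qed.

Lemma extractS_Riota_None d a h :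
  nth None a d = None -> allN (drop d.+1 a) ->
  extract d.+1 a (Riota h) = if allN (take d a) then Fhcomp d.+1 h else @Fzero K n.
Proof.
move=> hz hd; apply: functional_extensionality_dep => w.
case: (lastP w) => [|w' x]; first by rewrite /extract /Fhcomp /Fzero; case: ifP.
rewrite /extract size_rcons eqSS.
case: (eqVneq (size w') d) => [E|H]; last first.
  by case: ifP => _; rewrite /Fhcomp /Fzero // size_rcons eqSS (negbTE H).
rewrite fits_rcons fill_gaps_rcons E hz hd /= andbT.
rewrite Riota_mkmon -cats1 trim_cat /= all_cat /= andbT cats1 allS_fill_gaps E.
case hN: (allN (take d a)); last by case: ifP.
rewrite fits_allN // (fill_gaps_allN (a := a)) ?E //.
by rewrite /Fhcomp size_rcons E eqxx -map_rcons pmap_mapSome.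
Qed.

Lemma extract_nil_Riota d h : extract d [::] (Riota h) = Fhcomp d h.
Proof.
apply: functional_extensionality_dep => w; rewrite /extract /Fhcomp.
by rewrite fits_allN // andbT (fill_gaps_allN (a := [::])) ?Riota_mapSome.
Qed.

End Extract.

Section Uniqueness.
Variables (K : fieldType) (n : nat) (I : Fser K n -> Prop).
Hypothesis HI : F_graded_ideal I.
Notation sq := (seq (option 'I_n)).

Definition extract_closed (g : Rser K n) := forall d (a : sq), I (extract d a g).

Let HIideal : F_ideal I. Proof. by case: HI. Qed.

Let Izero : I (@Fzero K n). Proof. by case: HIideal. Qed.

Let Ihcomp d f : I f -> I (Fhcomp d f). Proof. by case: HI => _; apply. Qed.

Lemma extract_closed_Riota h : I h -> extract_closed (Riota h).
Proof.
move=> Ih; elim=> [|d IH] a.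
  by rewrite extract0_Riota; case: ifP => _; [exact: Ihcomp | exact: Izero].
case: (boolP (allN (drop d.+1 a))) => hd; last by rewrite extract_tail.
case E: (nth None a d) => [z|].
  by rewrite (extractS_Riota_Some _ E hd); apply: Fideal_mul_deltar.
by rewrite (extractS_Riota_None _ E hd); case: ifP => _; [exact: Ihcomp | exact: Izero].
Qed.

Lemma extract_closed_iter_Rsigma_Riota k h :
  I h -> extract_closed (iter k (@Rsigma K n) (Riota h)).
Proof.
move=> Ih; elim: k => [|k IH] d a; first exact: extract_closed_Riota.
rewrite iterS; case: d => [|d]; first by rewrite extract0_Rsigma; exact: IH.
rewrite extractS_Rsigma; case: (head None a) => [y|] //.
exact: Fideal_mul_deltal.
Qed.

Lemma extract_closed_ideal (J : Rser K n -> Prop) :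
  R_ideal J -> R_ideal (fun g => J g /\ extract_closed g).
Proof.
case=> JF J0 JD JM; split.
- by move=> g [Jg _]; exact: JF.
- by split => // d a; rewrite extract_Rzero.
- move=> g1 g2 [J1 W1] [J2 W2]; split; first exact: JD.
  by move=> d a; rewrite extract_Radd; case: HIideal => _ _ ID _ _; apply: ID.
- move=> b g hb [Jg Wg]; split; first exact: JM.
  move=> d a; case: hb => S hS.
  rewrite (@extract_Rmul K n d a b g (undup S)) ?undup_uniq //; last first.
    by move=> m /hS; rewrite mem_undup.
  by apply: Fideal_suml => // p _; apply: Fideal_scale.
Qed.

Lemma iota_preimage_subset (J : Rser K n -> Prop) :
  R_ideal J -> (forall g, J g <-> Lideal I g) -> forall f, iota_preimage J f -> I f.
Proof.
move=> HJ HJL f [hf /HJL Lf].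
have [_ Wf] : J (Riota f) /\ extract_closed (Riota f).
  apply: (Lideal_min (extract_closed_ideal HJ)) Lf => k h Ih; split.
    by apply/HJL; exact: Lideal_gen.
  exact: extract_closed_iter_Rsigma_Riota.
have [B ->] := Fhcomp_sum hf.
by apply: Fideal_suml => // d _; rewrite -extract_nil_Riota.
Qed.

End Uniqueness.

Theorem mainTheorem6 (K : fieldType) (n : nat) (J : Rser K n -> Prop) :
  R_graded_ideal J ->
  (forall f, J f -> J (Rsigma f)) ->
  (forall f, J f <-> R_gen (Jgens J) f) ->
  exists I : Fser K n -> Prop,
    [/\ F_graded_ideal I,
        (forall f, J f <-> Lideal I f)
      & forall I' : Fser K n -> Prop,
          F_graded_ideal I' -> (forall f, J f <-> Lideal I' f) ->
          forall f, I' f <-> I f].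
Proof.
move=> HJ HS Hgen; exists (iota_preimage J); split.
- exact: iota_preimage_graded.
- exact: Lideal_iota_preimage.
move=> I' HI' HJL f; split; last by apply: iota_preimage_subset => //; case: HJ.
move=> I'f; split; first by case: HI' => -[finsupp_I' _ _ _ _] _; exact: finsupp_I'.
by apply/HJL; exact: (Lideal_gen 0).
Qed.
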